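(* Let $z_1,\ldots,z_r,\zeta_1,\ldots,\zeta_{s+1}$ be orthonormal generators of $\mathrm{Cl}_{r,s+1}$ with $\langle z_i,z_i\rangle=1$, $\langle\zeta_j,\zeta_j\rangle=-1$, and let $a_1,\ldots,a_s,b_1,\ldots,b_{r+1}$ be orthonormal generators of $\mathrm{Cl}_{s,r+1}$ with $\langle a_i,a_i\rangle=1$, $\langle b_j,b_j\rangle=-1$. Let $\Phi\colon\mathrm{Cl}_{r,s+1}\to\mathrm{Cl}_{s,r+1}$ be the algebra isomorphism determined by $\Phi(z_i)=b_ib_{r+1}$ ($i=1,\ldots,r$), $\Phi(\zeta_j)=a_jb_{r+1}$ ($j=1,\ldots,s$), $\Phi(\zeta_{s+1})=b_{r+1}$. If $(V,\langle\cdot\,,\cdot\rangle_V)$ is an admissible module of $\mathrm{Cl}_{s,r+1}$ with representation $J\colon\mathrm{Cl}_{s,r+1}\to\mathrm{End}(V)$, then $V$ with the representation $J\circ\Phi\colon\mathrm{Cl}_{r,s+1}\to\mathrm{End}(V)$ and the same scalar product $\langle\cdot\,,\cdot\rangle_V$ is an admissible $\mathrm{Cl}_{r,s+1}$-module.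
   Context: A scalar product is a real symmetric non-degenerate bilinear form. $\mathbb R^{p,q}$ is $\mathbb R^{p+q}$ with quadratic form $x_1^2+\dots+x_p^2-x_{p+1}^2-\dots-x_{p+q}^2$ and $\mathrm{Cl}_{p,q}$ the Clifford algebra generated by $\mathbb R^{p,q}$ with relation $z^2=-\langle z,z\rangle\cdot1$ (so $z_i^2=-1$, $\zeta_j^2=1$, $a_i^2=-1$, $b_j^2=1$, and distinct orthonormal generators anticommute). A $\mathrm{Cl}_{p,q}$-module is a real vector space $V$ with a representation into $\mathrm{End}(V)$, and it is admissible if $V$ has a scalar product with $\langle J_zu,v\rangle_V=-\langle u,J_zv\rangle_V$ for all $z\in\mathbb R^{p,q}$, $u,v\in V$. *)

From HB Require Import structures.
From mathcomp Require Import all_boot all_order all_algebra.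
From mathcomp Require Import reals.
Set Implicit Arguments. Unset Strict Implicit. Unset Printing Implicit Defensive.
Import Order.TTheory GRing.Theory Num.Theory.
Local Open Scope ring_scope.

(* Generators of Cl_{p,q} = orthonormal basis e_0,...,e_{p+q-1} of R^{p,q}
   (0-based): <e_k,e_k> = 1 for k < p and = -1 for p <= k < p+q. *)
Definition cl_norm {R : realType} (p k : nat) : R := if (k < p)%N then 1 else -1.

(* A representation J : Cl_{p,q} -> End(V) is (by the universal property of the
   Clifford algebra) the same as the family of linear maps J_{e_k}, k < p+q,
   satisfying the Clifford relations J_z^2 = -<z,z> id and anticommutation of
   distinct orthonormal generators. [J k] is the image of the generator e_k. *)
Definition Cl_module {R : realType} {V : lmodType R} (p q : nat)
    (J : nat -> V -> V) : Prop :=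
  [/\ (forall k, (k < p + q)%N -> forall (a : R) (u v : V),
          J k (a *: u + v) = a *: J k u + J k v),
      (forall k, (k < p + q)%N -> forall u : V, J k (J k u) = - (cl_norm p k) *: u)
    & (forall k l, (k < p + q)%N -> (l < p + q)%N -> k <> l ->
          forall u : V, J k (J l u) = - J l (J k u))].

Definition scalar_product {R : realType} {V : lmodType R} (B : V -> V -> R) : Prop :=
  [/\ (forall u v, B u v = B v u),
      (forall (a : R) u v w, B (a *: u + v) w = a * B u w + B v w)
    & (forall u, (forall v, B u v = 0) -> u = 0)].

Definition J_of {R : realType} {V : lmodType R} (p q : nat) (J : nat -> V -> V)
    (x : nat -> R) (u : V) : V :=
  \sum_(0 <= k < p + q) x k *: J k u.

Definition admissible {R : realType} {V : lmodType R} (p q : nat)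
    (J : nat -> V -> V) (B : V -> V -> R) : Prop :=
  [/\ Cl_module p q J, scalar_product B
    & forall (x : nat -> R) (u v : V), B (J_of p q J x u) v = - B u (J_of p q J x v)].

(* Source generators (0-based): z_{i+1} = e_i (i < r), zeta_{j+1} = e_{r+j} (j <= s).
   Target generators: a_{j+1} = e_j (j < s), b_{i+1} = e_{s+i} (i <= r).
   Phi(z_{i+1}) = b_{i+1} b_{r+1}, Phi(zeta_{j+1}) = a_{j+1} b_{r+1} (j < s),
   Phi(zeta_{s+1}) = b_{r+1}. *)
Definition J_Phi {R : realType} {V : lmodType R} (r s : nat)
    (J : nat -> V -> V) : nat -> V -> V :=
  fun k => if (k < r)%N then J (s + k)%N \o J (s + r)%N
           else if (k < r + s)%N then J (k - r)%N \o J (s + r)%N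
           else J (s + r)%N.

(* Phi maps the generators of Cl_{r,s+1} to b_i b_{r+1}, a_j b_{r+1} and b_{r+1}, so
   J o Phi is generated by the operators J_x J_c (with c = b_{r+1}) and J_c itself.
   Since <c,c> = -1, J_c is an involution; as J_c anticommutes with every other J_x,
   the products J_x J_c anticommute pairwise and with J_c, and (J_x J_c)^2 = -J_x^2,
   which flips the signature exactly as Phi requires.  Skew-adjointness is preserved
   because a product of two anticommuting skew-adjoint operators is skew-adjoint. *)

From HB Require Import structures.
From mathcomp Require Import all_boot all_order all_algebra.
From mathcomp Require Import reals zify.
Set Implicit Arguments. Unset Strict Implicit. Unset Printing Implicit Defensive.
Import Order.TTheory GRing.Theory Num.Theory.
Local Open Scope ring_scope.

Lemma linear_oppr (R : pzRingType) (U W : lmodType R) (f : U -> W) :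
  linear f -> forall u, f (- u) = - f u.
Proof.
move=> lin_f u.
have f0 : f 0 = 0.
  have := lin_f 1 0 0; rewrite !scale1r !addr0 => f0_twice.
  by apply: (addrI (f 0)); rewrite addr0 -f0_twice.
by have := lin_f (-1) u 0; rewrite !addr0 f0 addr0 !scaleN1r.
Qed.

Section ScalarProduct.
Variables (R : realType) (V : lmodType R) (B : V -> V -> R).
Hypothesis hB : scalar_product B.

Definition form_left (w : V) : V -> R := B ^~ w.

Fact form_left_linear w : linear_for *%R (form_left w).
Proof. by case: hB => _ lin _ a u v; apply: lin. Qed.

HB.instance Definition _ w :=
  GRing.isLinear.Build R V R *%R (form_left w) (form_left_linear w).

Lemma form_sumZl (I : Type) (r : seq I) (a : I -> R) (F : I -> V) w :
  B (\sum_(i <- r) a i *: F i) w = \sum_(i <- r) a i * B (F i) w.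
Proof.
rewrite -[LHS]/(form_left w _) linear_sum; apply: eq_bigr => i _.
by rewrite linearZ.
Qed.

Lemma form_sumZr (I : Type) (r : seq I) (a : I -> R) (F : I -> V) w :
  B w (\sum_(i <- r) a i *: F i) = \sum_(i <- r) a i * B w (F i).
Proof.
case: hB => symB _ _; rewrite symB form_sumZl.
by apply: eq_bigr => i _; rewrite symB.
Qed.

Lemma formNr u w : B w (- u) = - B w u.
Proof. by case: hB => symB _ _; rewrite symB -[LHS]/(form_left w _) linearN symB. Qed.

End ScalarProduct.

Section Operators.
Variables (R : realType) (V : lmodType R).
Implicit Types (f g h : V -> V) (B : V -> V -> R).

Definition anticommute f g := forall u, f (g u) = - g (f u).

Definition skew_adjoint B f := forall u v, B (f u) v = - B u (f v).

Lemma anticommuteC f g : anticommute f g -> anticommute g f.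
Proof. by move=> fg u; rewrite fg opprK. Qed.

Lemma skew_adjoint_comp B f g : scalar_product B ->
  skew_adjoint B f -> skew_adjoint B g -> anticommute f g ->
  skew_adjoint B (f \o g).
Proof.
move=> hB skew_f skew_g fg u v /=.
by rewrite skew_f skew_g opprK (anticommuteC fg) formNr.
Qed.

Section Involution.
Variable h : V -> V.
Hypothesis h_invol : involutive h.

Lemma anticommute_conj_involutive f : anticommute f h -> forall u, h (f (h u)) = - f u.
Proof. by move=> fh u; rewrite (anticommuteC fh) h_invol. Qed.

Lemma comp_involutive_sqr f : {morph f : u / - u} -> anticommute f h ->
  forall u, (f \o h) ((f \o h) u) = - f (f u).
Proof. by move=> f_oppr fh u /=; rewrite anticommute_conj_involutive // f_oppr. Qed.

Lemma anticommute_comp_involutive f g :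
  {morph f : u / - u} -> {morph g : u / - u} ->
  anticommute f h -> anticommute g h -> anticommute f g ->
  anticommute (f \o h) (g \o h).
Proof.
move=> f_oppr g_oppr fh gh fg u /=.
by rewrite !anticommute_conj_involutive // f_oppr g_oppr fg.
Qed.

Lemma anticommute_comp_involutive_l f : anticommute f h -> anticommute (f \o h) h.
Proof. by move=> fh u /=; rewrite anticommute_conj_involutive // h_invol opprK. Qed.

End Involution.

End Operators.

Lemma J_of_delta (R : realType) (V : lmodType R) p q (J : nat -> V -> V) k u :
  (k < p + q)%N -> J_of p q J (fun i => (i == k)%:R) u = J k u.
Proof.
move=> lt_k; rewrite /J_of (bigD1_seq k) ?mem_index_iota ?iota_uniq //=.
by rewrite eqxx scale1r big1 ?addr0 // => i /negbTE ->; rewrite scale0r.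
Qed.

Lemma admissibleP (R : realType) (V : lmodType R) p q (J : nat -> V -> V) B :
  admissible p q J B <->
  [/\ Cl_module p q J, scalar_product B
    & forall k, (k < p + q)%N -> skew_adjoint B (J k)].
Proof.
split=> [[hJ hB skewJ] | [hJ hB skewJ]]; split=> //.
  by move=> k lt_k u v; rewrite -!(J_of_delta J _ lt_k) skewJ.
move=> x u v; rewrite /J_of form_sumZl // form_sumZr // -sumrN.
rewrite big_seq [RHS]big_seq; apply: eq_bigr => k; rewrite mem_index_iota => lt_k.
by rewrite skewJ // mulrN.
Qed.

Section CliffordModule.
Variables (R : realType) (V : lmodType R) (p q : nat) (J : nat -> V -> V).
Hypothesis hJ : Cl_module p q J.

Lemma Cl_gen_oppr k : (k < p + q)%N -> {morph J k : u / - u}.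
Proof. by case: hJ => lin _ _ lt_k; apply: linear_oppr; apply: lin. Qed.

Lemma Cl_gen_sqr k u : (k < p + q)%N -> J k (J k u) = - cl_norm p k *: u.
Proof. by case: hJ => _ sqr _ lt_k; apply: sqr. Qed.

Lemma Cl_gen_involutive k : (p <= k < p + q)%N -> involutive (J k).
Proof.
case/andP=> le_pk lt_k u.
by rewrite Cl_gen_sqr // /cl_norm ltnNge le_pk opprK scale1r.
Qed.

Lemma Cl_gen_anticommute k l : (k < p + q)%N -> (l < p + q)%N -> k <> l ->
  anticommute (J k) (J l).
Proof. by case: hJ => _ _ anti; apply: anti. Qed.

End CliffordModule.

(* Index of the generator x of Cl_{s,r+1} with Phi(e_k) = x b_{r+1}, for k < r + s. *)
Definition Phi_index (r s k : nat) : nat := if (k < r)%N then (s + k)%N else (k - r)%N.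

Section PhiIndex.
Variables r s : nat.

Lemma Phi_index_lt k : (k < r + s)%N -> (Phi_index r s k < s + (r + 1))%N.
Proof. by rewrite /Phi_index; case: ifP; lia. Qed.

Lemma Phi_index_neq k : (k < r + s)%N -> Phi_index r s k <> (s + r)%N.
Proof. by rewrite /Phi_index; case: ifP; lia. Qed.

Lemma Phi_index_inj k l : (k < r + s)%N -> (l < r + s)%N -> k <> l ->
  Phi_index r s k <> Phi_index r s l.
Proof. by rewrite /Phi_index; case: ifP; case: ifP; lia. Qed.

Lemma cl_norm_Phi_index (R : realType) k : (k < r + s)%N ->
  cl_norm s (Phi_index r s k) = - cl_norm r k :> R.
Proof.
rewrite /cl_norm /Phi_index; case: (ltnP k r) => [lt_kr | le_rk] lt_k.
  by rewrite ltnNge leq_addr.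
by rewrite ifT ?opprK //; lia.
Qed.

Lemma J_Phi_lt (R : realType) (V : lmodType R) (J : nat -> V -> V) k :
  (k < r + s)%N -> J_Phi r s J k = J (Phi_index r s k) \o J (s + r)%N.
Proof. by move=> lt_k; rewrite /J_Phi /Phi_index; case: ifP => // _; rewrite lt_k. Qed.

Lemma J_Phi_last (R : realType) (V : lmodType R) (J : nat -> V -> V) :
  J_Phi r s J (r + s)%N = J (s + r)%N.
Proof. by rewrite /J_Phi ifF ?ifF //; lia. Qed.

End PhiIndex.

Section TwistedModule.
Variables (R : realType) (V : lmodType R) (r s : nat) (J : nat -> V -> V).
Hypothesis hJ : Cl_module s (r + 1) J.

Let c := (s + r)%N.
Let lt_c : (c < s + (r + 1))%N. Proof. rewrite /c; lia. Qed.
Let Jc_invol : involutive (J c).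
Proof. by apply: (Cl_gen_involutive hJ); rewrite /c; lia. Qed.

Let Phi_anticommute_c k : (k < r + s)%N -> anticommute (J (Phi_index r s k)) (J c).
Proof.
move=> lt_k; apply: (Cl_gen_anticommute hJ) => //.
  exact: Phi_index_lt.
exact: Phi_index_neq.
Qed.

Lemma Cl_module_J_Phi : Cl_module r (s + 1) (J_Phi r s J).
Proof.
have [lin _ _] := hJ.
split.
- move=> k lt_k a u v; have [lt_krs | le_rsk] := ltnP k (r + s).
    by rewrite J_Phi_lt //= !lin //; apply: Phi_index_lt.
  have -> : k = (r + s)%N by lia.
  by rewrite J_Phi_last lin.
- move=> k lt_k u; have [lt_krs | le_rsk] := ltnP k (r + s).
    have Jk_oppr := Cl_gen_oppr hJ (Phi_index_lt lt_krs).
    rewrite J_Phi_lt // (comp_involutive_sqr Jc_invol Jk_oppr (Phi_anticommute_c lt_krs)).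
    by rewrite (Cl_gen_sqr hJ) ?Phi_index_lt // cl_norm_Phi_index // opprK scaleNr.
  have -> : k = (r + s)%N by lia.
  by rewrite J_Phi_last Jc_invol /cl_norm ltnNge leq_addr opprK scale1r.
- move=> k l lt_k lt_l neq_kl.
  have [lt_krs | le_rsk] := ltnP k (r + s); have [lt_lrs | le_rsl] := ltnP l (r + s).
  + have Jk_oppr := Cl_gen_oppr hJ (Phi_index_lt lt_krs).
    have Jl_oppr := Cl_gen_oppr hJ (Phi_index_lt lt_lrs).
    rewrite !J_Phi_lt //; apply: anticommute_comp_involutive => //;
      try exact: Phi_anticommute_c.
    apply: (Cl_gen_anticommute hJ); rewrite ?Phi_index_lt //.
    exact: Phi_index_inj.
  + have -> : l = (r + s)%N by lia.
    rewrite J_Phi_last J_Phi_lt //.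
    exact/anticommute_comp_involutive_l/Phi_anticommute_c.
  + have -> : k = (r + s)%N by lia.
    rewrite J_Phi_last J_Phi_lt //.
    exact/anticommuteC/anticommute_comp_involutive_l/Phi_anticommute_c.
  + by exfalso; lia.
Qed.

Lemma skew_adjoint_J_Phi B : scalar_product B ->
  (forall k, (k < s + (r + 1))%N -> skew_adjoint B (J k)) ->
  forall k, (k < r + (s + 1))%N -> skew_adjoint B (J_Phi r s J k).
Proof.
move=> hB skewJ k lt_k; have [lt_krs | le_rsk] := ltnP k (r + s).
  rewrite J_Phi_lt //; apply: skew_adjoint_comp => //.
  - exact/skewJ/Phi_index_lt.
  - exact/skewJ/lt_c.
  - exact: Phi_anticommute_c.
have -> : k = (r + s)%N by lia.
by rewrite J_Phi_last; apply: skewJ.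
Qed.

End TwistedModule.

Theorem theorem3p1 (R : realType) (V : lmodType R) (r s : nat)
    (J : nat -> V -> V) (B : V -> V -> R) :
  admissible s (r + 1) J B -> admissible r (s + 1) (J_Phi r s J) B.
Proof.
move=> /admissibleP [hJ hB skewJ]; apply/admissibleP; split=> //.
  exact: Cl_module_J_Phi.
exact: skew_adjoint_J_Phi.
Qed.
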